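(* Let $E=E(R/\mathfrak m)$ and $N^\circ=\mathrm{Hom}_R(N,E)$ for an $R$-module $N$. Then: (a) if $N^\circ$ is strongly prime, then $N$ is strongly coprime; (b) if $N^\circ$ is strongly coprime, then $N$ is strongly prime; (c) if $N$ is reflexive (the canonical map $N\to N^{\circ\circ}$ is an isomorphism), the converses of (a) and (b) hold as well.
   Context: $R$ is a commutative Noetherian local ring with maximal ideal $\mathfrak m$, $E(R/\mathfrak m)$ the injective hull of $R/\mathfrak m$. A module $M\ne0$ is strongly prime if every nonzero $R$-endomorphism of $M$ is injective; a module $N\neq0$ is strongly coprime if every nonzero $R$-endomorphism of $N$ is surjective. *)

From HB Require Import structures.
From mathcomp Require Import all_boot all_order all_algebra.
From mathcomp Require Import boolp classical_sets functions.
Set Implicit Arguments.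
Unset Strict Implicit.
Unset Printing Implicit Defensive.
Import GRing.Theory.
Local Open Scope ring_scope.
Local Open Scope classical_set_scope.

Section Modules.
Variable R : comNzRingType.

Definition is_ideal (I : set R) : Prop :=
  [/\ I 0, (forall x y, I x -> I y -> I (x + y)) &
      (forall r x, I x -> I (r * x))].

Definition is_maximal_ideal (m : set R) : Prop :=
  [/\ is_ideal m, ~ m 1 &
      forall J : set R, is_ideal J -> ~ J 1 -> m `<=` J -> J = m].

Definition noetherian_ring : Prop :=
  forall I : nat -> set R, (forall n, is_ideal (I n)) ->
    (forall n, I n `<=` I n.+1) ->
    exists n, forall k, (n <= k)%N -> I k = I n.

Definition local_ring_with_max (m : set R) : Prop :=
  is_maximal_ideal m /\ forall J, is_maximal_ideal J -> J = m.

Definition nonzero_module (M : lmodType R) : Prop := exists x : M, x != 0.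

Definition is_submodule (M : lmodType R) (S : set M) : Prop :=
  [/\ S 0, (forall x y, S x -> S y -> S (x + y)) &
      (forall (r : R) x, S x -> S (r *: x))].

(* K is (isomorphic to) the cyclic module R/m *)
Definition residue_module (m : set R) (K : lmodType R) : Prop :=
  exists e : K, (forall x : K, exists r : R, x = r *: e) /\
                (forall r : R, r *: e = 0 <-> m r).

Definition injective_module (E : lmodType R) : Prop :=
  forall (A B : lmodType R) (i : {linear A -> B}) (g : {linear A -> E}),
    injective i -> exists h : {linear B -> E}, forall a, h (i a) = g a.

Definition injective_hull (K E : lmodType R) : Prop :=
  injective_module E /\
  exists j : {linear K -> E}, injective j /\
    forall S : set E, is_submodule S -> (exists x, S x /\ x != 0) ->
      exists k : K, k != 0 /\ S (j k).

Definition strongly_prime (M : lmodType R) : Prop :=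
  nonzero_module M /\
  forall f : {linear M -> M}, (exists x, f x != 0) -> injective f.

Definition strongly_coprime (M : lmodType R) : Prop :=
  nonzero_module M /\
  forall f : {linear M -> M}, (exists x, f x != 0) ->
    forall y, exists x, f x = y.

Definition linpred (N E : lmodType R) : {pred N -> E} :=
  fun f => `[< linear f >].

Lemma linpred_closed (N E : lmodType R) : subsemimod_closed (@linpred N E).
Proof.
split; [split|].
- by apply/asboolP => a u v; rewrite /= scaler0 addr0.
- move=> f g /asboolP lf /asboolP lg; apply/asboolP => a u v /=.
  change (f (a *: u + v) + g (a *: u + v) =
          a *: (f u + g u) + (f v + g v)).
  by rewrite lf lg scalerDr addrACA.
- move=> r f /asboolP lf; apply/asboolP => a u v /=.
  change (r *: f (a *: u + v) = a *: (r *: f u) + r *: f v).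
  by rewrite lf scalerDr !scalerA mulrC.
Qed.

Record HomR (N E : lmodType R) :=
  MkHom { hom_app : N -> E; hom_lin : linpred hom_app }.
HB.instance Definition _ (N E : lmodType R) := [isSub for @hom_app N E].
HB.instance Definition _ (N E : lmodType R) := [Choice of HomR N E by <:].
HB.instance Definition _ (N E : lmodType R) :=
  GRing.SubChoice_isSubLmodule.Build R (N -> E) (@linpred N E) (HomR N E)
    (@linpred_closed N E).


Lemma ev_linear (N E : lmodType R) (n : N) :
  linpred (fun g : HomR N E => hom_app g n).
Proof. by apply/asboolP => a u v. Qed.

Definition ev_map (N E : lmodType R) (n : N) : HomR (HomR N E) E :=
  @MkHom (HomR N E) E (fun g : HomR N E => hom_app g n) (@ev_linear N E n).

(* N is reflexive: the canonical map N -> N°° is an isomorphism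
   (it is always R-linear, so this amounts to bijectivity) *)
Definition reflexive_module (N E : lmodType R) : Prop :=
  bijective (@ev_map N E).

End Modules.
Coercion hom_app : HomR >-> Funclass.

From HB Require Import structures.
From mathcomp Require Import all_boot all_order all_algebra.
From mathcomp Require Import boolp classical_sets functions.
Set Implicit Arguments.
Unset Strict Implicit.
Unset Printing Implicit Defensive.
Import GRing.Theory.
Local Open Scope ring_scope.
Local Open Scope classical_set_scope.

(* Only two properties of E are used: E is injective, and E is a cogenerator
   in the sense that a point y outside a submodule S of any module M is
   separated from S by a linear map M -> E.  Then, for the dual f° : g |-> g o f of a linear map f,
   it proves: f° injective -> f onto, f° onto -> f injective, and conversely
   f onto -> f° injective, f injective -> f° onto (the last using injectivity
   of E).  Finally, for reflexive N every endomorphism of N° is of the form f°. *)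

Definition linear_of (R : comNzRingType) (U V : lmodType R) (f : U -> V)
    (f_lin : linear f) : {linear U -> V} :=
  HB.pack f (GRing.isLinear.Build R U V *:%R f f_lin).

(* Elements of Hom_R(N, E) are linear maps; declaring this canonically lets
   the generic lemmas on linear maps (linear0, linearB, ...) apply to them. *)
Lemma hom_is_linear (R : comNzRingType) (N E : lmodType R) (g : HomR N E) :
  linear g.
Proof. exact/asboolP/hom_lin. Qed.

HB.instance Definition _ (R : comNzRingType) (N E : lmodType R)
    (g : HomR N E) :=
  GRing.isLinear.Build R N E *:%R (hom_app g) (hom_is_linear g).

Section HomBasics.
Variables (R : comNzRingType) (N E : lmodType R).

Lemma hom_ext (g1 g2 : HomR N E) : g1 =1 g2 -> g1 = g2.
Proof. by move=> eq_g; apply: val_inj; apply: funext. Qed.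

Definition hom_of (h : {linear N -> E}) : HomR N E :=
  MkHom (asboolT (linearP h)).

Lemma hom_neq0 (g : HomR N E) : g != 0 -> exists x, g x != 0.
Proof.
move=> g_neq0; apply: contrapT => g_vanish; move/eqP: g_neq0; apply.
apply: hom_ext => x; apply: contrapT => gx.
by apply: g_vanish; exists x; apply/eqP.
Qed.

End HomBasics.

Section MaximalIdeals.
Variable R : comNzRingType.

(* In a ring with the ascending chain condition every proper ideal lies in a
   maximal ideal: otherwise one could enlarge it strictly forever. *)
Lemma noetherian_max_ideal (I : set R) : noetherian_ring R ->
  is_ideal I -> ~ I 1 -> exists J, is_maximal_ideal J /\ I `<=` J.
Proof.
move=> acc idI I1; apply: contrapT => no_max.
pose larger (J : set R) :=
  exists J', [/\ is_ideal J', ~ J' 1, J `<=` J' & J' <> J].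
pose grow (J : set R) : set R :=
  if pselect (larger J) is left p then projT1 (cid p) else J.
have growP J : is_ideal J -> ~ J 1 -> I `<=` J ->
    [/\ is_ideal (grow J), ~ grow J 1, J `<=` grow J & grow J <> J].
  move=> idJ J1 IJ; have : larger J.
    apply: contrapT => not_larger; apply: no_max; exists J; split=> //.
    split=> // J' idJ' J'1 JJ'; apply: contrapT => neJ'.
    by apply: not_larger; exists J'.
  by rewrite /grow; case: pselect => // p _; case: (projT2 (cid p)).
pose chain n := iter n grow I.
have chainP n : [/\ is_ideal (chain n), ~ chain n 1 & I `<=` chain n].
  elim: n => [|n [idn n1 In]] /=; first by split.
  have [? ? ? _] := growP _ idn n1 In.
  by split=> //; apply: subset_trans In _.
have [n stable] : exists n, forall k, (n <= k)%N -> chain k = chain n.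
  apply: acc => [k|k]; first by case: (chainP k).
  by have [idk k1 Ik] := chainP k; case: (growP _ idk k1 Ik).
have [idn n1 In] := chainP n; have [_ _ _] := growP _ idn n1 In.
by apply; exact: (stable n.+1 (leqnSn n)).
Qed.

Lemma proper_ideal_sub_max (m I : set R) : noetherian_ring R ->
  local_ring_with_max m -> is_ideal I -> ~ I 1 -> I `<=` m.
Proof.
move=> acc [_ uniq_max] idI I1.
have [J [maxJ IJ]] := noetherian_max_ideal acc idI I1.
by rewrite -(uniq_max J maxJ).
Qed.

End MaximalIdeals.

Section SpanPredicate.
Variables (R : comNzRingType) (M : lmodType R) (S : set M) (y : M).

Definition span_pred : {pred M} :=
  fun z => `[< exists s r, S s /\ z = s + r *: y >].

Lemma span_predP (s : M) (r : R) : S s -> span_pred (s + r *: y).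
Proof. by move=> Ss; apply/asboolP; exists s, r. Qed.

Lemma span_pred_closed : is_submodule S -> subsemimod_closed span_pred.
Proof.
case=> S0 SD SZ; split; [split|].
- by rewrite -[0]addr0 -[X in _ + X](scale0r y); apply: span_predP.
- move=> _ _ /asboolP[s1 [r1 [S1 ->]]] /asboolP[s2 [r2 [S2 ->]]].
  by rewrite addrACA -scalerDl; apply/span_predP/SD.
- move=> a _ /asboolP[s [r [Ss ->]]].
  by rewrite scalerDr scalerA; apply/span_predP/SZ.
Qed.

End SpanPredicate.

(* The submodule S + R y of M, as a module in its own right; it is indexed by
   the proof that S is a submodule, which its module structure uses. *)
Record Span (R : comNzRingType) (M : lmodType R) (S : set M) (y : M)
    (subS : is_submodule S) :=
  MkSpan { span_val : M; span_valP : span_pred S y span_val }.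

HB.instance Definition _ (R : comNzRingType) (M : lmodType R) (S : set M)
  (y : M) (subS : is_submodule S) := [isSub for @span_val R M S y subS].
HB.instance Definition _ (R : comNzRingType) (M : lmodType R) (S : set M)
  (y : M) (subS : is_submodule S) := [Choice of @Span R M S y subS by <:].
HB.instance Definition _ (R : comNzRingType) (M : lmodType R) (S : set M)
  (y : M) (subS : is_submodule S) :=
  GRing.SubChoice_isSubLmodule.Build R M (span_pred S y) (@Span R M S y subS)
    (span_pred_closed y subS).

Lemma span_val_linear (R : comNzRingType) (M : lmodType R) (S : set M) (y : M)
    (subS : is_submodule S) : linear (@span_val R M S y subS).
Proof. by []. Qed.

Section CyclicExtension.
Variables (R : comNzRingType) (M E : lmodType R).
Variables (S : set M) (y : M) (x0 : E).
Hypotheses (injE : injective_module E) (subS : is_submodule S).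
Hypothesis ann_x0 : forall r, S (r *: y) -> r *: x0 = 0.

(* In S + R y the coefficient of y is determined up to the annihilator of
   x0: this is what makes s + r y |-> r x0 well defined. *)
Lemma span_coef_unique (s s' : M) (r r' : R) :
  S s -> S s' -> s + r *: y = s' + r' *: y -> r *: x0 = r' *: x0.
Proof.
have [_ SD SZ] := subS.
move=> Ss Ss' eq_decomp; apply/eqP; rewrite -subr_eq0 -scalerBl.
apply/eqP/ann_x0.
have -> : (r - r') *: y = s' - s.
  by rewrite scalerBl -[r *: y](addKr s) eq_decomp addrA addrK addrC.
by apply: SD => //; rewrite -scaleN1r; apply: SZ.
Qed.

(* Hence s + r y |-> r x0 is a linear map S + R y -> E, and injectivity of E
   extends it to all of M. *)
Lemma extend_from_cyclic :
  exists h : {linear M -> E}, (forall s, S s -> h s = 0) /\ h y = x0.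
Proof.
have [S0 SD SZ] := subS.
pose T : lmodType R := @Span _ _ S y subS.
have decomp (z : T) : exists r s, S s /\ span_val z = s + r *: y.
  by have /asboolP[s [r ?]] := span_valP z; exists r, s.
pose coef (z : T) : R := projT1 (cid (decomp z)).
have coefP (z : T) r s : S s -> span_val z = s + r *: y ->
    coef z *: x0 = r *: x0.
  have [s' [Ss' zE']] := projT2 (cid (decomp z)).
  by move=> Ss zE; apply: span_coef_unique Ss' Ss _; rewrite -zE'.
pose g (z : T) : E := coef z *: x0.
have g_lin : linear g.
  move=> a u v; have [ru [su [Su uE]]] := decomp u.
  have [rv [sv [Sv vE]]] := decomp v.
  rewrite /g (coefP u _ _ Su uE) (coefP v _ _ Sv vE) scalerA -scalerDl.
  apply: (coefP _ _ (a *: su + sv)); first by apply: SD => //; apply: SZ.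
  rewrite span_val_linear uE vE.
  by rewrite scalerDr scalerA addrACA -scalerDl.
pose incl : {linear T -> M} := linear_of (@span_val_linear R M S y subS).
have incl_inj : injective incl by move=> u v; apply: val_inj.
have [h hE] := injE (linear_of g_lin) incl_inj.
exists h; split=> [s Ss|].
- have /= hs := hE (@MkSpan _ _ _ _ subS _ (span_predP y 0 Ss)).
  rewrite -[s]addr0 -(scale0r y) hs /g (coefP _ 0 s) ?scale0r //.
- have /= hy := hE (@MkSpan _ _ _ _ subS _ (span_predP y 1 S0)).
  rewrite -[y in h y]add0r -[y in h (0 + y)]scale1r hy /g.
  by rewrite (coefP _ 1 0) ?scale1r.
Qed.

End CyclicExtension.

(* E separates points from submodules: this is the form in which the
   cogenerator property of E = E(R/m) enters the argument. *)
Definition cogenerator (R : comNzRingType) (E : lmodType R) : Prop :=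
  forall (M : lmodType R) (S : set M) (y : M), is_submodule S -> ~ S y ->
    exists h : {linear M -> E}, (forall s, S s -> h s = 0) /\ h y != 0.

Lemma cogenerator_detects (R : comNzRingType) (E M : lmodType R) (x : M) :
  cogenerator E -> x != 0 -> exists h : {linear M -> E}, h x != 0.
Proof.
move=> cogE x_neq0.
have sub0 : is_submodule [set (0 : M)].
  split=> //= [u v -> ->|r u ->]; [exact: addr0 | exact: scaler0].
have [|h [_ hx]] := cogE M _ x sub0; last by exists h.
by move=> /= x_eq0; rewrite x_eq0 eqxx in x_neq0.
Qed.

(* The injective hull of R/m over a Noetherian local ring is a cogenerator:
   if y is not in S, the ideal {r | r y in S} is proper, hence inside m, so it
   kills the image e of the generator of R/m, and s + r y |-> r e extends. *)
Lemma residue_hull_cogenerator (R : comNzRingType) (m : set R)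
    (K E : lmodType R) : noetherian_ring R -> local_ring_with_max m ->
  residue_module m K -> injective_hull K E -> cogenerator E.
Proof.
move=> acc loc [e [_ ann_e]] [injE [j [j_inj _]]] M S y subS Sy.
have [[_ m1 _] _] := loc.
have [S0 SD SZ] := subS.
have id_ann : is_ideal (fun r => S (r *: y)).
  split=> [|a b Sa Sb|a b Sb]; first by rewrite scale0r.
  - by rewrite scalerDl; apply: SD.
  - by rewrite -scalerA; apply: SZ.
have ann_m : (fun r => S (r *: y)) `<=` m.
  by apply: proper_ideal_sub_max id_ann _ => //; rewrite scale1r.
have [h [hS hy]] : exists h : {linear M -> E},
    (forall s, S s -> h s = 0) /\ h y = j e.
  apply: extend_from_cyclic => // r /ann_m /ann_e re0.
  by rewrite -linearZ re0 linear0.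
exists h; split=> //; rewrite hy; apply/eqP => je0.
by apply: m1; apply/ann_e; rewrite scale1r; apply: j_inj; rewrite je0 linear0.
Qed.

Section Duality.
Variables (R : comNzRingType) (E : lmodType R).

Definition dual (U V : lmodType R) (f : {linear U -> V}) (g : HomR V E) :
  HomR U E := hom_of (g \o f).

Lemma dual_is_linear (U V : lmodType R) (f : {linear U -> V}) :
  linear (dual f).
Proof. by move=> a g1 g2; apply: hom_ext. Qed.

End Duality.
Arguments dual {R} E {U V} f g.
Arguments dual_is_linear {R} E {U V} f.

HB.instance Definition _ (R : comNzRingType) (E U V : lmodType R)
  (f : {linear U -> V}) :=
  GRing.isLinear.Build R (HomR V E) (HomR U E) *:%R (dual E f)
    (dual_is_linear E f).

Section DualityFacts.
Variables (R : comNzRingType) (E : lmodType R).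
Implicit Types U V N : lmodType R.

Lemma dual_neq0 U V (f : {linear U -> V}) : cogenerator E ->
  (exists x, f x != 0) -> exists g, dual E f g != 0.
Proof.
move=> cogE [x /(cogenerator_detects cogE) [h hfx]]; exists (hom_of h).
by apply: contraNneq hfx => /(congr1 (fun g : HomR U E => g x)) /= ->.
Qed.

Lemma neq0_of_dual_neq0 U V (f : {linear U -> V}) :
  (exists g, dual E f g != 0) -> exists x, f x != 0.
Proof.
move=> [g /hom_neq0 [x gfx]]; exists x.
by apply: contraNneq gfx => /= ->; rewrite linear0.
Qed.

Lemma nonzero_of_dual N : nonzero_module (HomR N E) -> nonzero_module N.
Proof.
move=> [g /hom_neq0 [x gx]]; exists x.
by apply: contraNneq gx => ->; rewrite linear0.
Qed.

Lemma dual_nonzero N : cogenerator E -> nonzero_module N ->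
  nonzero_module (HomR N E).
Proof.
move=> cogE [x /(cogenerator_detects cogE) [h hx]]; exists (hom_of h).
by apply: contraNneq hx => /(congr1 (fun g : HomR N E => g x)) /= ->.
Qed.

(* f° injective implies f surjective: a point outside the range of f is
   separated from it by some g, and then f° g = 0 = f° 0. *)
Lemma surjective_of_dual_injective U V (f : {linear U -> V}) :
  cogenerator E -> injective (dual E f) -> forall y, exists x, f x = y.
Proof.
move=> cogE dual_inj y; apply: contrapT => not_im.
have sub_im : is_submodule (range f).
  split; first by exists 0 => //; rewrite linear0.
  - by move=> _ _ [a _ <-] [b _ <-]; exists (a + b) => //; rewrite linearD.
  - by move=> r _ [a _ <-]; exists (r *: a) => //; rewrite linearZ.
have [|h [h_im hy]] := cogE V _ y sub_im.
  by move=> [x _ fx]; apply: not_im; exists x.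
have h0 : hom_of h = 0.
  by apply: dual_inj; apply: hom_ext => x; rewrite linear0 /= h_im //; exists x.
by move/eqP: hy; apply; rewrite -[h y]/(hom_of h y) h0.
Qed.

(* f° surjective implies f injective: if f (a - b) = 0 then every g in U°,
   being of the form G o f, vanishes at a - b, so a - b = 0. *)
Lemma injective_of_dual_surjective U V (f : {linear U -> V}) :
  cogenerator E -> (forall g, exists G, dual E f G = g) -> injective f.
Proof.
move=> cogE dual_onto a b fab; apply/eqP; rewrite -subr_eq0; apply/negPn/negP.
move=> /(cogenerator_detects cogE) [h hab].
have [G /(congr1 (fun g : HomR U E => g (a - b)))] := dual_onto (hom_of h).
by rewrite /= linearB fab subrr linear0 => h0; rewrite -h0 eqxx in hab.
Qed.

Lemma dual_injective_of_surjective U V (f : {linear U -> V}) :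
  (forall y, exists x, f x = y) -> injective (dual E f).
Proof.
move=> f_onto g1 g2 eq_dual; apply: hom_ext => y; have [x <-] := f_onto y.
exact: (congr1 (fun g : HomR U E => g x) eq_dual).
Qed.

Lemma dual_surjective_of_injective U V (f : {linear U -> V}) :
  injective_module E -> injective f -> forall g, exists G, dual E f G = g.
Proof.
move=> injE f_inj g.
have [G GE] := injE U V f (linear_of (hom_is_linear g)) f_inj.
by exists (hom_of G); apply: hom_ext => x; apply: GE.
Qed.

End DualityFacts.

Section Reflexive.
Variables (R : comNzRingType) (E N : lmodType R).

Lemma ev_map_linear : linear (@ev_map R N E).
Proof. by move=> a u v; apply: hom_ext => g /=; rewrite linearP. Qed.

(* For reflexive N, every endomorphism phi of N° is a dual map: it is f°
   for f = ev^-1 o phi° o ev, where ev : N -> N°° is the evaluation map. *)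
Lemma reflexive_endo_dual : reflexive_module N E ->
  forall phi : {linear HomR N E -> HomR N E},
  exists f : {linear N -> N}, phi =1 dual E f.
Proof.
move=> [ev_inv evK ev_invK] phi.
pose ev := linear_of ev_map_linear.
pose ev_inv_lin := linear_of (can2_linear (f := ev) evK ev_invK).
exists (ev_inv_lin \o dual E phi \o ev) => g; apply: hom_ext => x /=.
by rewrite -[g (ev_inv _)]/(ev_map E (ev_inv _) g) ev_invK.
Qed.

End Reflexive.

Section StronglyPrimeDuality.
Variables (R : comNzRingType) (E N : lmodType R).
Hypothesis cogE : cogenerator E.

(* (a): a nonzero f has a nonzero, hence injective, dual; so f is onto. *)
Lemma strongly_coprime_of_dual_prime :
  strongly_prime (HomR N E) -> strongly_coprime N.
Proof.
move=> [nzN' dual_inj]; split; first exact: nonzero_of_dual nzN'.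
move=> f /(dual_neq0 cogE) f'_neq0.
exact: surjective_of_dual_injective cogE (dual_inj _ f'_neq0).
Qed.

(* (b): a nonzero f has a nonzero, hence onto, dual; so f is injective. *)
Lemma strongly_prime_of_dual_coprime :
  strongly_coprime (HomR N E) -> strongly_prime N.
Proof.
move=> [nzN' dual_onto]; split; first exact: nonzero_of_dual nzN'.
move=> f /(dual_neq0 cogE) f'_neq0.
exact: injective_of_dual_surjective cogE (dual_onto _ f'_neq0).
Qed.

(* (c), first converse: a nonzero phi on N° is f° for a nonzero, hence onto,
   f; so phi is injective. *)
Lemma dual_prime_of_coprime : reflexive_module N E ->
  strongly_coprime N -> strongly_prime (HomR N E).
Proof.
move=> reflN [nzN f_onto]; split; first exact: dual_nonzero cogE nzN.
move=> phi phi_neq0; have [f phiE] := reflexive_endo_dual reflN phi.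
have /neq0_of_dual_neq0 f_neq0 : exists g, dual E f g != 0.
  by have [g] := phi_neq0; rewrite phiE; exists g.
move=> g1 g2; rewrite !phiE.
exact: (dual_injective_of_surjective (f_onto _ f_neq0)) g1 g2.
Qed.

(* (c), second converse: a nonzero phi on N° is f° for a nonzero, hence
   injective, f; as E is injective, phi is onto. *)
Lemma dual_coprime_of_prime : injective_module E -> reflexive_module N E ->
  strongly_prime N -> strongly_coprime (HomR N E).
Proof.
move=> injE reflN [nzN f_inj]; split; first exact: dual_nonzero cogE nzN.
move=> phi phi_neq0 g; have [f phiE] := reflexive_endo_dual reflN phi.
have /neq0_of_dual_neq0 f_neq0 : exists g, dual E f g != 0.
  by have [g'] := phi_neq0; rewrite phiE; exists g'.
have [G <-] := dual_surjective_of_injective injE (f_inj _ f_neq0) g.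
by exists G; apply: phiE.
Qed.

End StronglyPrimeDuality.

Theorem lemma2p2 (R : comNzRingType) (m : set R)
  (hNoeth : noetherian_ring R) (hloc : local_ring_with_max m)
  (K E : lmodType R) (hK : residue_module m K) (hE : injective_hull K E)
  (N : lmodType R) :
  (strongly_prime (HomR N E) -> strongly_coprime N) /\
  (strongly_coprime (HomR N E) -> strongly_prime N) /\
  (reflexive_module N E ->
     (strongly_coprime N -> strongly_prime (HomR N E)) /\
     (strongly_prime N -> strongly_coprime (HomR N E))).
Proof.
have cogE := residue_hull_cogenerator hNoeth hloc hK hE.
split; first exact: strongly_coprime_of_dual_prime.
split; first exact: strongly_prime_of_dual_coprime.
move=> reflN; split; first exact: dual_prime_of_coprime.
exact: dual_coprime_of_prime hE.1 reflN.
Qed.
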